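(* For all $x\in\mathbb{C}$ and all integers $n\ge0$, \[ \sum_{k=0}^n x^k\big(L_{3k}+(2x-1)F_{3k+3}\big)=2x^{n+1}F_{3n+3} \] and \[ \sum_{k=0}^n x^k\big(5F_{3k}+(2x-1)L_{3k+3}\big)=2x^{n+1}L_{3n+3}-4. \]
   Context: $F_n,L_n$ are the Fibonacci and Lucas numbers: $F_0=0$, $F_1=1$, $L_0=2$, $L_1=1$, $W_n=W_{n-1}+W_{n-2}$. *)

From HB Require Import structures.
From mathcomp Require Import all_boot all_order all_algebra.
From mathcomp Require Import complex.
From mathcomp Require Import Rstruct.
Set Implicit Arguments. Unset Strict Implicit. Unset Printing Implicit Defensive.

Fixpoint fib (n : nat) : nat :=
  match n with
  | 0 => 0
  | S m => match m with 0 => 1 | S p => fib m + fib p end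
  end.

Fixpoint lucas (n : nat) : nat :=
  match n with
  | 0 => 2
  | S m => match m with 0 => 1 | S p => lucas m + lucas p end
  end.

Definition CC := complex.complex Rdefinitions.R.

From HB Require Import structures.
From mathcomp Require Import all_boot all_order all_algebra.
From mathcomp Require Import complex.
From mathcomp Require Import Rstruct.
From mathcomp Require Import ring.
Import GRing.Theory.

(* With u k = F_(3k) and v k = L_(3k) one has u (k+1) = 2 u k + v k and
   v (k+1) = 2 v k + 5 u k.  Any such recurrence f (k+1) = 2 f k + g k makes
   x^k (g k + (2x - 1) f (k+1)) equal to 2 x^(k+1) f (k+1) - 2 x^k f k, so both
   sums telescope; the constants come from u 0 = 0 and v 0 = 2. *)

Lemma fibSS (n : nat) : fib n.+2 = fib n.+1 + fib n. Proof. by []. Qed.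

Lemma lucasSS (n : nat) : lucas n.+2 = lucas n.+1 + lucas n. Proof. by []. Qed.

Lemma fib_add3 (m : nat) : fib (m + 3) = 2 * fib m + lucas m.
Proof.
elim/ltn_ind: m => -[|[|m]] IH //.
by rewrite !addSn !fibSS !lucasSS -addSn IH // IH // mulnDr addnACA.
Qed.

Lemma lucas_add3 (m : nat) : lucas (m + 3) = 2 * lucas m + 5 * fib m.
Proof.
elim/ltn_ind: m => -[|[|m]] IH //.
by rewrite !addSn !fibSS !lucasSS -addSn IH // IH // !mulnDr addnACA.
Qed.

Local Open Scope ring_scope.

Lemma sum_pow_telescope {R : comPzRingType} (x : R) {f g : nat -> R} (n : nat) :
  (forall k, f k.+1 = 2 * f k + g k) ->
  \sum_(0 <= k < n) x ^+ k * (g k + (2 * x - 1) * f k.+1)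
    = 2 * x ^+ n * f n - 2 * f 0%N.
Proof.
move=> fS; rewrite (telescope_sumr_eq (fun k => 2 * x ^+ k * f k)) ?expr0 ?mulr1 // => k _.
by rewrite fS exprS; ring.
Qed.

Theorem corollary4 (x : CC) (n : nat) :
  \sum_(0 <= k < n.+1) x ^+ k * ((lucas (3 * k))%:R + (2 * x - 1) * (fib (3 * k + 3))%:R)
    = 2 * x ^+ n.+1 * (fib (3 * n + 3))%:R
  /\
  \sum_(0 <= k < n.+1) x ^+ k * (5 * (fib (3 * k))%:R + (2 * x - 1) * (lucas (3 * k + 3))%:R)
    = 2 * x ^+ n.+1 * (lucas (3 * n + 3))%:R - 4.
Proof.
pose F k : CC := (fib (3 * k))%:R; pose L k : CC := (lucas (3 * k))%:R.
have FS k : F k.+1 = 2 * F k + L k.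
  by rewrite /F /L mulnSr fib_add3 natrD natrM.
have LS k : L k.+1 = 2 * L k + 5 * F k.
  by rewrite /F /L mulnSr lucas_add3 natrD !natrM.
split.
- under eq_bigr do rewrite -mulnSr.
  by rewrite -mulnSr (sum_pow_telescope x n.+1 FS) mulr0 subr0.
- under eq_bigr do rewrite -mulnSr.
  have twoL0 : 2 * L 0%N = 4 by rewrite /L -natrM.
  by rewrite -mulnSr (sum_pow_telescope x n.+1 LS) twoL0.
Qed.
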